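(* For every integer $r\ge 2$, every real $c\ge \frac1{r-1}$ and every real $\epsilon>1/c$, there is a hereditary property $\mathcal H$ of $r$-uniform hypergraphs and an infinite set $S\subseteq\mathbb N$ such that $|\mathcal H_n|=n^{(r-1)(c+o(1))n}$ as $n\to\infty$ with $n\in S$, and such that $|\mathcal H_n|\ge 2^{n^{r-\epsilon}}$ for infinitely many $n$.
   Context: A hereditary property of $r$-uniform hypergraphs is a class of finite $r$-uniform hypergraphs closed under isomorphism and under taking induced subhypergraphs. $\mathcal H_n$ denotes the set of members of $\mathcal H$ with vertex set $[n]=\{1,\dots,n\}$. *)

From mathcomp Require Import all_boot.
From Stdlib Require Import Reals.
Set Implicit Arguments. Unset Strict Implicit.

Definition uniform_hg (r n : nat) (G : {set {set 'I_n}}) : bool :=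
  [forall e in G, #|e| == r].

(* The hypergraph on 'I_m obtained by pulling back G along g : 'I_m -> 'I_n;
   for injective g this is the induced subhypergraph of G on the image of g,
   relabelled via g (covers isomorphic copies when g is a bijection). *)
Definition pullback_hg (m n : nat) (g : 'I_m -> 'I_n) (G : {set {set 'I_n}})
  : {set {set 'I_m}} := [set e : {set 'I_m} | (g @: e) \in G].

(* A property is given by its labelled members P n on each vertex set [n]. *)
Definition hereditary_prop (r : nat) (P : forall n : nat, pred {set {set 'I_n}}) : Prop :=
  (forall n (G : {set {set 'I_n}}), P n G -> uniform_hg r G) /\
  (forall m n (g : 'I_m -> 'I_n), injective g ->
     forall G : {set {set 'I_n}}, P n G -> P m (pullback_hg g G)).

Definition Hn (P : forall n : nat, pred {set {set 'I_n}}) (n : nat) : nat :=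
  #|[set G : {set {set 'I_n}} | P n G]|.

From Stdlib Require Import Reals Lra ZArith ClassicalEpsilon.
From mathcomp Require Import all_boot zify.

(* Let t(k) be the least integer above c k, choose sizes s_0 < s_1 < ... growing
   fast enough, and let H consist of the r-uniform hypergraphs in which every
   vertex set U with |U| = s_j spans fewer than t(|U|) edges; H is hereditary.
   For n = s_(j+1) every member of H_n has fewer than t(n) ~ c n edges, whence
   |H_n| <= n^((r-1)(c+o(1))n).  Conversely, with K = s_j fixed, a first-moment
   count shows that at least half of the hypergraphs on [n] with m edges have
   fewer than t(k) edges inside every k-set, k <= K, as soon as
   n^k (K^r m / n^r)^t(k) = o(1).  Since t(k) > c k >= k / (r - 1) this holds
   for m ~ (c - delta) n, giving the lower bound at n = s_(j+1); since
   t(k) / c > k it also holds for m ~ n^(r - eps') with 1/c < eps' <= eps,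
   giving |H_n| >= 2^(n^(r - eps)) at n = s_(j+1) - 1, where only the sizes up
   to K constrain H. *)

Set Implicit Arguments. Unset Strict Implicit. Unset Printing Implicit Defensive.

Lemma ffact_leq_expn n m : n ^_ m <= n ^ m.
Proof.
rewrite ffact_prod -[X in _ <= n ^ X](card_ord m) -prod_nat_const.
by apply: leq_prod => i _; apply: leq_subr.
Qed.

Lemma expn_sub_leq_ffact n m : (n - m) ^ m <= n ^_ m.
Proof.
rewrite ffact_prod -[X in _ ^ X <= _](card_ord m) -prod_nat_const.
by apply: leq_prod => i _; apply: leq_sub2l; apply: ltnW.
Qed.

Lemma bin_leq_expn n k : 'C(n, k) <= n ^ k.
Proof.
apply: leq_trans (ffact_leq_expn n k); rewrite -bin_ffact.
by rewrite leq_pmulr ?fact_gt0.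
Qed.

Lemma expn_leq_bin_fact n k : (n - k) ^ k <= 'C(n, k) * k ^ k.
Proof.
apply: leq_trans (expn_sub_leq_ffact n k) _; rewrite -bin_ffact leq_mul2l.
by rewrite -ffactnn ffact_leq_expn orbT.
Qed.

Lemma bin_fact_leq_expn n j T : j <= T <= n -> 'C(n, j) * T`! <= n ^ T.
Proof.
move=> /andP[+ leTn]; elim: T leTn => [|T IHT].
  by move=> _; rewrite leqn0 => /eqP ->; rewrite bin0 fact0.
move=> leTn; rewrite leq_eqVlt => /orP[/eqP <-|ltjT].
  by rewrite bin_ffact ffact_leq_expn.
by rewrite factS mulnCA expnS leq_mul // IHT // ltnW.
Qed.

Lemma sum_bin_fact_leq n T : T <= n ->
  (\sum_(j < T.+1) 'C(n, j)) * T`! <= T.+1 * n ^ T.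
Proof.
move=> leTn; rewrite big_distrl /= -[T.+1 in X in _ <= X](card_ord T.+1).
rewrite -sum_nat_const; apply: leq_sum => j _.
by rewrite bin_fact_leq_expn // -ltnS ltn_ord.
Qed.

(* The proportion of [m]-subsets of an [M]-set that contain a fixed [s]-set
   is at most [(m / (M - s)) ^ s]. *)
Lemma bin_sub_mul_expn_leq M m s : m <= M ->
  'C(M - s, m - s) * (s <= m) * (M - s) ^ s <= 'C(M, m) * m ^ s.
Proof.
move=> lemM; have [lesm|] := leqP s m; last by rewrite muln0 mul0n.
have eq_ffact : 'C(M - s, m - s) * M ^_ s = 'C(M, m) * m ^_ s.
  have pos : 0 < (m - s)`! * (M - m)`! by rewrite muln_gt0 !fact_gt0.
  apply/eqP; rewrite -(eqn_pmul2r pos); apply/eqP.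
  have eMm : M - s - (m - s) = M - m by lia.
  have := bin_fact (leq_sub2r s lemM); rewrite eMm => binMs.
  rewrite mulnAC binMs mulnC ffact_fact ?(leq_trans lesm) //.
  by rewrite -(bin_fact lemM) -(ffact_fact lesm) !mulnA.
rewrite muln1; apply: leq_trans (_ : 'C(M - s, m - s) * M ^_ s <= _).
  by rewrite leq_mul2l (leq_trans _ (expn_sub_leq_ffact M s)) ?orbT.
by rewrite eq_ffact leq_mul2l ffact_leq_expn orbT.
Qed.

Lemma expn_leq_bin_mul n r : 2 * r <= n -> n ^ r <= 'C(n, r) * (2 ^ r * r`!).
Proof.
move=> le2rn; rewrite mulnCA bin_ffact.
apply: leq_trans (_ : 2 ^ r * (n - r) ^ r <= _); last by rewrite leq_mul2l expn_sub_leq_ffact orbT.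
rewrite -expnMn; have [->|r_gt0] := posnP r; first by [].
by rewrite leq_exp2r //; lia.
Qed.

Lemma leq_sum_subset (I : finType) (A B : {set I}) (F : I -> nat) :
  A \subset B -> \sum_(i in A) F i <= \sum_(i in B) F i.
Proof. by move=> sAB; rewrite [X in _ <= X](big_setID A) /= (setIidPr sAB) leq_addr. Qed.

Lemma sum_by_card n K (h : nat -> nat) :
  \sum_(U : {set 'I_n} | #|U| <= K) h #|U| = \sum_(k < K.+1) 'C(n, k) * h k.
Proof.
rewrite (partition_big (fun U : {set 'I_n} => inord #|U| : 'I_K.+1) xpredT) //=.
apply: eq_bigr => k _.
rewrite (eq_bigl [in [set U : {set 'I_n} | #|U| == k]]) => [|U].
  rewrite (eq_bigr (fun=> h k)) => [|U]; last by rewrite inE => /eqP ->.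
  by rewrite sum_nat_const card_draws card_ord.
rewrite inE; apply/andP/eqP => [[leUK /eqP <-]|eqUk]; first by rewrite inordK.
by split; [rewrite eqUk -ltnS | apply/eqP/val_inj; rewrite /= inordK eqUk].
Qed.

Lemma first_moment_term_leq M m n k b t K : t < M -> m <= M ->
  2 * K.+1 * (n ^ k * (b * m) ^ t) <= (M - t) ^ t ->
  2 * K.+1 * 'C(n, k) * ('C(b, t) * ('C(M - t, m - t) * (t <= m))) <= 'C(M, m).
Proof.
move=> ltTM lemM hyp; have pos : 0 < (M - t) ^ t by rewrite expn_gt0 subn_gt0 ltTM.
rewrite -(leq_pmul2r pos).
apply: leq_trans (_ : 2 * K.+1 * (n ^ k * (b ^ t * ('C(M, m) * m ^ t))) <= _).
  rewrite -!mulnA !leq_mul2l; apply/orP; right; apply/orP; right.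
  apply: leq_mul; first exact: bin_leq_expn.
  by apply: leq_mul; [exact: bin_leq_expn | rewrite mulnA bin_sub_mul_expn_leq].
rewrite mulnC; apply: leq_trans (leq_mul (leqnn _) hyp); rewrite expnMn.
by apply/eq_leq; lia.
Qed.

Section SparseHypergraphs.
Variable r : nat.

Definition rsets n : {set {set 'I_n}} := [set e : {set 'I_n} | #|e| == r].

Definition edges_in n (E : {set {set 'I_n}}) (U : {set 'I_n}) : {set {set 'I_n}} :=
  [set e in E | e \subset U].

Definition hg_of_size n m : {set {set {set 'I_n}}} :=
  [set E : {set {set 'I_n}} | E \subset rsets n & #|E| == m].

Definition small_hg n T : {set {set {set 'I_n}}} :=
  [set E : {set {set 'I_n}} | E \subset rsets n & #|E| <= T].

Definition edge_draws n (U : {set 'I_n}) s : {set {set {set 'I_n}}} :=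
  [set T : {set {set 'I_n}} | T \subset edges_in (rsets n) U & #|T| == s].

Definition sparse_hg n m K (t : nat -> nat) : {set {set {set 'I_n}}} :=
  [set E in hg_of_size n m |
     [forall U : {set 'I_n}, (#|U| <= K) ==> (#|edges_in E U| < t #|U|)]].

Lemma card_rsets n : #|rsets n| = 'C(n, r).
Proof. by rewrite card_draws card_ord. Qed.

Lemma card_edges_in_rsets n (U : {set 'I_n}) : #|edges_in (rsets n) U| = 'C(#|U|, r).
Proof.
rewrite -cards_draws; apply: eq_card => e.
by rewrite !inE andbC.
Qed.

Lemma card_hg_of_size n m : #|hg_of_size n m| = 'C('C(n, r), m).
Proof. by rewrite cards_draws card_rsets. Qed.

Lemma card_small_hg_fact n T : T <= 'C(n, r) ->
  #|small_hg n T| * T`! <= T.+1 * 'C(n, r) ^ T.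
Proof.
move=> leTM; apply: leq_trans (sum_bin_fact_leq leTM); rewrite leq_mul2r; apply/orP; right.
rewrite -sum1_card (partition_big (fun E : {set {set 'I_n}} => inord #|E| : 'I_T.+1) xpredT) //=.
apply: leq_sum => j _; rewrite -(card_hg_of_size n j) -sum1_card.
rewrite big_mkcond [X in _ <= X]big_mkcond /=.
apply: leq_sum => E _; rewrite !inE.
case: ifP => // /andP[/andP[-> leET] /eqP <-].
by rewrite inordK ?ltnS ?eqxx.
Qed.

Lemma card_hg_containing n m (T : {set {set 'I_n}}) : T \subset rsets n ->
  #|[set E in hg_of_size n m | T \subset E]| <= 'C('C(n, r) - #|T|, m - #|T|) * (#|T| <= m).
Proof.
move=> sTR; have [lesm|ltms] := leqP #|T| m; last first.
  rewrite muln0 leqn0 cards_eq0; apply/eqP/setP => E; rewrite !inE.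
  apply/negbTE/negP => /andP[/andP[_ /eqP eEm] /subset_leq_card]; lia.
set D := [set E in hg_of_size n m | T \subset E].
have injD : {in D &, injective (fun E => E :\: T)}.
  move=> E1 E2; rewrite !inE => /andP[_ sTE1] /andP[_ sTE2] eqD.
  by rewrite -(setID E1 T) -(setID E2 T) (setIidPr sTE1) (setIidPr sTE2) eqD.
have -> : 'C('C(n, r) - #|T|, m - #|T|) =
    #|[set A : {set {set 'I_n}} | A \subset rsets n :\: T & #|A| == m - #|T|]|.
  by rewrite cards_draws cardsD (setIidPr sTR) card_rsets.
rewrite muln1 -(card_in_imset injD); apply: subset_leq_card; apply/subsetP => _ /imsetP[E + ->].
rewrite !inE => /andP[/andP[sER /eqP eEm] sTE].
by rewrite setSD //= -eEm -(cardsID T E) (setIidPr sTE) addKn.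
Qed.

Lemma edges_in_sub n (E : {set {set 'I_n}}) U : edges_in E U \subset E.
Proof. by apply/subsetP => e; rewrite inE => /andP[]. Qed.

Lemma edges_inS n (E F : {set {set 'I_n}}) U : E \subset F -> edges_in E U \subset edges_in F U.
Proof. by move=> sEF; apply/subsetP => e; rewrite !inE => /andP[/(subsetP sEF) -> ->]. Qed.

Lemma not_sparse_witness n m K t E : E \in hg_of_size n m :\: sparse_hg n m K t ->
  exists2 U : {set 'I_n}, #|U| <= K &
    exists2 T, T \in edge_draws U (t #|U|) & T \subset E.
Proof.
rewrite !inE => /andP[+ /andP[sER eEm]]; rewrite sER eEm /= => /forallPn[U].
rewrite negb_imply -leqNgt => /andP[leUK letE]; exists U => //.
have : 0 < #|[set T : {set {set 'I_n}} | T \subset edges_in E U & #|T| == t #|U|]|.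
  by rewrite cards_draws bin_gt0.
case/card_gt0P=> T; rewrite inE => /andP[sTEU eTt]; exists T.
  by rewrite inE eTt (subset_trans sTEU) ?edges_inS.
exact: subset_trans sTEU (edges_in_sub _ _).
Qed.

Lemma card_not_sparse_leq n m K t :
  #|hg_of_size n m :\: sparse_hg n m K t| <=
  \sum_(U : {set 'I_n} | #|U| <= K)
    \sum_(T in edge_draws U (t #|U|)) #|[set E in hg_of_size n m | T \subset E]|.
Proof.
rewrite -sum1_card; apply: leq_trans (_ : \sum_(E in hg_of_size n m :\: sparse_hg n m K t)
  \sum_(U : {set 'I_n} | #|U| <= K) \sum_(T in edge_draws U (t #|U|)) (T \subset E : nat) <= _).
  apply: leq_sum => E /not_sparse_witness[U leUK [T drawT sTE]].
  by rewrite (bigD1 U) //= (bigD1 T) //= sTE -addnA leq_addr.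
apply: leq_trans (leq_sum_subset _ (subsetDl _ _)) _.
rewrite exchange_big; apply: leq_sum => U _; rewrite exchange_big; apply: leq_sum => T _.
by rewrite -big_mkcondr -sum1_card; apply/eq_leq/eq_bigl => E; rewrite !inE.
Qed.

Lemma card_edge_draws n (U : {set 'I_n}) s : #|edge_draws U s| = 'C('C(#|U|, r), s).
Proof. by rewrite cards_draws card_edges_in_rsets. Qed.

Lemma sparse_half n m K t : m <= 'C(n, r) -> (forall k, k <= K -> t k < 'C(n, r)) ->
  (forall k, k <= K -> 2 * K.+1 * (n ^ k * ('C(k, r) * m) ^ t k) <= ('C(n, r) - t k) ^ t k) ->
  'C('C(n, r), m) <= 2 * #|sparse_hg n m K t|.
Proof.
move=> lemM ltTM hyp; set M := 'C(n, r).
have sSH : sparse_hg n m K t \subset hg_of_size n m by apply/subsetP => E; rewrite inE => /andP[].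
set bad := hg_of_size n m :\: sparse_hg n m K t.
have card_split : 'C(M, m) = #|sparse_hg n m K t| + #|bad|.
  by rewrite -card_hg_of_size -(cardsID (sparse_hg n m K t)) (setIidPr sSH).
suff : 2 * #|bad| <= 'C(M, m) by lia.
pose g k := 'C('C(k, r), t k) * ('C(M - t k, m - t k) * (t k <= m)).
have bad_sum : #|bad| <= \sum_(k < K.+1) 'C(n, k) * g k.
  rewrite -(sum_by_card n K g); apply: leq_trans (card_not_sparse_leq n m K t) _.
  apply: leq_sum => U _; rewrite /g -card_edge_draws -sum_nat_const.
  apply: leq_sum => T; rewrite inE => /andP[sTR /eqP <-].
  by apply: card_hg_containing; apply: subset_trans sTR (edges_in_sub _ _).
rewrite -(leq_pmul2l (ltn0Sn K)).
apply: leq_trans (leq_mul (leqnn _) (leq_mul (leqnn 2) bad_sum)) _.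
rewrite -[X in _ <= X * _](card_ord K.+1) -sum_nat_const mulnA [_ * 2]mulnC big_distrr /=.
apply: leq_sum => k _; have lekK : k <= K by rewrite -ltnS.
by rewrite mulnA; apply: first_moment_term_leq; [exact: ltTM | | exact: hyp].
Qed.

Definition sparse_on (S : pred nat) (t : nat -> nat) n : pred {set {set 'I_n}} :=
  fun G => uniform_hg r G && [forall U : {set 'I_n}, S #|U| ==> (#|edges_in G U| < t #|U|)].

Lemma uniform_hgE n (G : {set {set 'I_n}}) : uniform_hg r G = (G \subset rsets n).
Proof.
apply/forall_inP/subsetP => [uG e eG|sGR e /sGR]; last by rewrite inE.
by rewrite inE uG.
Qed.

Lemma pullback_rsets m n (g : 'I_m -> 'I_n) (G : {set {set 'I_n}}) : injective g ->
  G \subset rsets n -> pullback_hg g G \subset rsets m.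
Proof.
by move=> inj_g /subsetP sGR; apply/subsetP => e; rewrite inE => /sGR; rewrite !inE card_imset.
Qed.

Lemma card_edges_in_pullback m n (g : 'I_m -> 'I_n) (G : {set {set 'I_n}}) U : injective g ->
  #|edges_in (pullback_hg g G) U| <= #|edges_in G (g @: U)|.
Proof.
move=> inj_g; rewrite -(card_imset _ (imset_inj inj_g)); apply: subset_leq_card.
by apply/subsetP => _ /imsetP[e + ->]; rewrite !inE => /andP[eG sUe]; rewrite eG imsetS.
Qed.

Lemma sparse_on_hereditary S t : hereditary_prop r (sparse_on S t).
Proof.
split=> [n G /andP[] //|m n g inj_g G /andP[uG /forallP sparseG]].
apply/andP; split; first by rewrite uniform_hgE pullback_rsets // -uniform_hgE.
apply/forallP => U; apply/implyP => SU; apply: leq_ltn_trans (card_edges_in_pullback G U inj_g) _.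
by have := sparseG (g @: U); rewrite card_imset // SU.
Qed.

Lemma sparse_hg_sub_on n m K t (S : pred nat) :
  (forall s, S s -> s <= n -> s <= K \/ s = n /\ m < t n) ->
  sparse_hg n m K t \subset [set G | sparse_on S t G].
Proof.
move=> sizesS; apply/subsetP => E; rewrite !inE => /andP[/andP[sER /eqP eEm] /forallP sparseE].
apply/andP; split; first by rewrite uniform_hgE.
apply/forallP => U; apply/implyP => SU.
have [leUK|[eUn ltmt]] := sizesS _ SU (leq_trans (max_card U) (eq_leq (card_ord n))).
  by have := sparseE U; rewrite leUK.
by rewrite eUn; apply: leq_ltn_trans (subset_leq_card (edges_in_sub _ _)) _; rewrite eEm.
Qed.

Lemma sparse_on_sub_small n t (S : pred nat) : S n -> 0 < t n ->
  [set G | sparse_on S t G] \subset small_hg n (t n).-1.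
Proof.
move=> Sn t_gt0; apply/subsetP => G; rewrite !inE => /andP[uG /forallP sparseG].
rewrite -uniform_hgE uG -ltnS prednK //.
have := sparseG setT; rewrite cardsT card_ord Sn /=.
by congr (_ < _); apply: eq_card => e; rewrite !inE subsetT andbT.
Qed.

End SparseHypergraphs.

Section GrowingSequence.
Variable Q : nat -> nat -> nat -> Prop.
Hypothesis Q_ex : forall j K, exists n, K < n /\ Q j K n.

Fixpoint grow j : nat :=
  if j is j'.+1 then proj1_sig (constructive_indefinite_description _ (Q_ex j' (grow j')))
  else 0.

Lemma grow_step j : grow j < grow j.+1 /\ Q j (grow j) (grow j.+1).
Proof. exact: proj2_sig (constructive_indefinite_description _ (Q_ex j (grow j))). Qed.

Lemma grow_mono : {mono grow : i j / i <= j}.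
Proof. by apply: leq_mono; apply: (homo_ltn ltn_trans) => j; case: (grow_step j). Qed.

Lemma grow_ge j : j <= grow j.
Proof. by elim: j => // j IHj; apply: leq_ltn_trans IHj (proj1 (grow_step j)). Qed.

(* Decidable because [j <= grow j]. *)
Definition in_grow n : bool := [exists j : 'I_n.+1, grow j == n].

Lemma in_growP n : reflect (exists j, grow j = n) (in_grow n).
Proof.
apply: (iffP existsP) => [[j /eqP <-]|[j <-]]; first by exists j.
by exists (Ordinal (grow_ge j : j < (grow j).+1)).
Qed.

End GrowingSequence.

Local Open Scope R_scope.

Lemma le_INR_leq m n : (m <= n)%N -> INR m <= INR n.
Proof. by move/leP; apply: le_INR. Qed.

Lemma leq_INR m n : INR m <= INR n -> (m <= n)%N.
Proof. by move/INR_le/leP. Qed.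

Lemma lt_INR_ltn m n : (m < n)%N -> INR m < INR n.
Proof. by move/ltP; apply: lt_INR. Qed.

Lemma ltn_INR m n : INR m < INR n -> (m < n)%N.
Proof. by move/INR_lt/ltP. Qed.

Lemma INR_expn m k : INR (m ^ k) = INR m ^ k.
Proof. by elim: k => [|k IHk] //; rewrite expnS mult_INR IHk. Qed.

Lemma ln_le x y : 0 < x -> x <= y -> ln x <= ln y.
Proof. by move=> x_gt0 [ltxy|<-]; [left; apply: ln_increasing | right]. Qed.

Lemma exp_le x y : x <= y -> exp x <= exp y.
Proof. by move=> [ltxy|<-]; [left; apply: exp_increasing | right]. Qed.

Lemma ln_le_sub1 x : 0 < x -> ln x <= x - 1.
Proof. by move=> x_gt0; have := exp_ineq1_le (ln x); rewrite exp_ln //; lra. Qed.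

Lemma ln_ge0 x : 1 <= x -> 0 <= ln x.
Proof. by move=> x_ge1; rewrite -ln_1; apply: ln_le; lra. Qed.

Lemma Rpower_ge1 x y : 1 <= x -> 0 <= y -> 1 <= Rpower x y.
Proof. by move=> x_ge1 y_ge0; rewrite -(Rpower_O x); [apply: Rle_Rpower | lra]. Qed.

(* [nat_up x] is the least natural number strictly above [x >= 0]. *)
Definition nat_up (x : R) : nat := Z.to_nat (up x).

Definition nat_floor (x : R) : nat := (nat_up x).-1.

Lemma nat_up_spec x : 0 <= x -> x < INR (nat_up x) <= x + 1.
Proof.
move=> x_ge0; have [gt_up le_up] := archimed x.
rewrite /nat_up INR_IZR_INZ Z2Nat.id; first lra.
by apply: le_IZR; lra.
Qed.

Lemma nat_up_gt0 x : 0 <= x -> (0 < nat_up x)%N.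
Proof.
move=> x_ge0; have [lt_up _] := nat_up_spec x_ge0.
by apply: ltn_INR; rewrite [INR 0]/=; lra.
Qed.

Lemma nat_floor_spec x : 0 <= x -> INR (nat_floor x) <= x < INR (nat_floor x) + 1.
Proof.
move=> x_ge0; have [lt_up le_up] := nat_up_spec x_ge0.
have eq_up : INR (nat_up x) = INR (nat_floor x) + 1.
  by rewrite /nat_floor -[in LHS](prednK (nat_up_gt0 x_ge0)) S_INR.
lra.
Qed.

Lemma nat_up_mono x y : x <= y -> (nat_up x <= nat_up y)%N.
Proof.
move=> lexy; have [ax bx] := archimed x; have [ay b_y] := archimed y.
have : (up x <= up y)%Z.
  apply: Znot_gt_le => lt_up; have : (up y <= up x - 1)%Z by lia.
  by move/IZR_le; rewrite minus_IZR /=; lra.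
by rewrite /nat_up => ?; apply/leP; lia.
Qed.

Definition eventually (P : nat -> Prop) : Prop := exists N, forall n, (N <= n)%N -> P n.

Lemma eventually_and (P Q : nat -> Prop) :
  eventually P -> eventually Q -> eventually (fun n => P n /\ Q n).
Proof.
move=> [N1 PN1] [N2 QN2]; exists (maxn N1 N2) => n.
by rewrite geq_max => /andP[/PN1 ? /QN2 ?].
Qed.

Lemma eventually_impl (P Q : nat -> Prop) :
  (forall n, P n -> Q n) -> eventually P -> eventually Q.
Proof. by move=> PQ [N PN]; exists N => n /PN /PQ. Qed.

Lemma eventually_pred (P : nat -> Prop) : eventually P -> eventually (fun n => P n.-1).
Proof. by move=> [N PN]; exists N.+1 => -[|n] //; rewrite ltnS => /PN. Qed.

Lemma eventually_exists_gt (P : nat -> Prop) K : eventually P -> exists n, (K < n)%N /\ P n.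
Proof.
move=> [N PN]; exists (maxn N K.+1).
by rewrite leq_max leqnn orbT; split; last apply/PN/leq_maxl.
Qed.

Lemma eventually_geq a : eventually (fun n => (a <= n)%N).
Proof. by exists a. Qed.

Lemma eventually_INR_ge A : eventually (fun n => A <= INR n).
Proof.
exists (nat_up (Rmax A 0)) => n /le_INR_leq.
by have := nat_up_spec (Rmax_r A 0); have := Rmax_l A 0; lra.
Qed.

Lemma eventually_ln_ge A : eventually (fun n => A <= ln (INR n)).
Proof.
apply: eventually_impl (eventually_INR_ge (exp A)) => n le_expA.
by rewrite -[A]ln_exp; apply: ln_le => //; apply: exp_pos.
Qed.

Lemma eventually_scaled_ln_ge A q : 0 < q -> eventually (fun n => A <= q * ln (INR n)).
Proof.
move=> q_gt0; apply: eventually_impl (eventually_ln_ge (A / q)) => n le_Aq.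
have := Rmult_le_compat_l _ _ _ (Rlt_le _ _ q_gt0) le_Aq.
by have -> : q * (A / q) = A by field; lra.
Qed.

Lemma eventually_mul_INR_ge A q : 0 < q -> eventually (fun n => A <= q * INR n).
Proof.
move=> q_gt0; apply: eventually_impl (eventually_INR_ge (A / q)) => n le_Aq.
have := Rmult_le_compat_l _ _ _ (Rlt_le _ _ q_gt0) le_Aq.
by have -> : q * (A / q) = A by field; lra.
Qed.

Lemma eventually_Rpower_ge A g : 0 < g -> eventually (fun n => A <= Rpower (INR n) g).
Proof.
move=> g_gt0; apply: eventually_impl (eventually_scaled_ln_ge (ln (Rabs A + 1)) g_gt0) => n le_ln.
have A_le := Rle_abs A; have A_ge := Rabs_pos A.
apply: Rle_trans (_ : Rabs A + 1 <= _); first lra.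
by rewrite /Rpower -[Rabs A + 1]exp_ln; [apply: exp_le | lra].
Qed.

Lemma Rpower_pow_mult x y t : Rpower x y ^ t = Rpower x (INR t * y).
Proof.
elim: t => [|t IHt]; first by rewrite /Rpower /= !Rmult_0_l exp_0.
by rewrite -tech_pow_Rmult IHt -Rpower_plus S_INR; congr Rpower; ring.
Qed.

Lemma first_moment_term_of_real n m k K t M r (rho Q : R) : (k <= K)%N -> INR m <= rho -> 0 < Q ->
  Q <= INR (M - t) -> 2 * INR K.+1 * INR n ^ k * (INR K ^ r * rho / Q) ^ t <= 1 ->
  (2 * K.+1 * (n ^ k * ('C(k, r) * m) ^ t) <= (M - t) ^ t)%N.
Proof.
move=> lekK lemrho Q_gt0 leQ hyp; apply: leq_INR.
rewrite !mult_INR !INR_expn mult_INR.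
have le_bin : INR 'C(k, r) <= INR K ^ r.
  rewrite -INR_expn; apply: le_INR_leq; apply: leq_trans (bin_leq_expn k r) _.
  by elim: (r) => // e IHe; rewrite !expnS leq_mul.
have rho_ge0 : 0 <= rho by have := pos_INR m; lra.
have KK_ge0 : 0 <= 2 * INR K.+1 * INR n ^ k.
  by have := pos_INR K.+1; have := pow_le _ k (pos_INR n); nra.
apply: Rle_trans (_ : 2 * INR K.+1 * INR n ^ k * (INR K ^ r * rho) ^ t <= _).
  rewrite -Rmult_assoc; apply: Rmult_le_compat_l => //; apply: pow_incr; split.
    by have := pos_INR 'C(k, r); have := pos_INR m; nra.
  by apply: Rmult_le_compat => //; apply: pos_INR.
apply: Rle_trans (_ : Q ^ t <= _); last by apply: pow_incr; lra.
have -> : INR K ^ r * rho = INR K ^ r * rho / Q * Q by field; lra.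
rewrite Rpow_mult_distr -Rmult_assoc.
by have := pow_lt _ t Q_gt0; nra.
Qed.

Lemma first_moment_term_decay (N B P a g : R) k t T : 1 <= N -> 0 <= B -> 0 <= P ->
  (t <= T)%N -> INR k - a * INR t <= - g -> P * (1 + B) ^ T <= Rpower N g ->
  P * N ^ k * (B * Rpower N (- a)) ^ t <= 1.
Proof.
move=> N_ge1 B_ge0 P_ge0 letT le_exp le_g.
rewrite Rpow_mult_distr Rpower_pow_mult -(Rpower_pow k N); last lra.
have BT_le : B ^ t <= (1 + B) ^ T.
  apply: Rle_trans (_ : (1 + B) ^ t <= _); first by apply: pow_incr; lra.
  by apply: Rle_pow; [lra | apply/leP].
have N_le : Rpower N (INR k + INR t * - a) <= / Rpower N g.
  by rewrite -Rpower_Ropp; apply: Rle_Rpower => //; lra.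
have g_pos : 0 < Rpower N g by apply: exp_pos.
apply: Rle_trans (_ : P * ((1 + B) ^ T * / Rpower N g) <= _).
  rewrite Rmult_assoc; apply: Rmult_le_compat_l => //.
  rewrite Rmult_comm Rmult_assoc [_ * Rpower N _]Rmult_comm -Rpower_plus.
  apply: Rmult_le_compat => //; first exact: pow_le.
  by left; apply: exp_pos.
rewrite -Rmult_assoc; apply: (Rmult_le_reg_r (Rpower N g)) => //.
by rewrite Rmult_assoc Rinv_l; lra.
Qed.

Lemma Rpower_sub_sub1 x y : 0 < x -> Rpower x (y - (y - 1)) = x.
Proof. by move=> x_gt0; rewrite -[RHS]Rpower_1 //; congr Rpower; ring. Qed.

Lemma pow_Rpower_split a x n : 0 < x -> x ^ n = Rpower x (INR n - a) * Rpower x a.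
Proof. by move=> x_gt0; rewrite -Rpower_plus -Rpower_pow //; congr Rpower; ring. Qed.

Section Asymptotics.
Variables (r : nat) (c : R).
Hypothesis r_ge2 : (2 <= r)%N.
Hypothesis c_ge : 1 / (INR r - 1) <= c.

Lemma r_sub1_ge1 : 1 <= INR r - 1.
Proof. by have := le_INR_leq r_ge2; rewrite [INR 2]/=; lra. Qed.

Lemma c_gt0 : 0 < c.
Proof.
have r1_ge1 := r_sub1_ge1.
have : 0 < 1 / (INR r - 1) by apply: Rdiv_lt_0_compat; lra.
lra.
Qed.

Lemma r_sub1_mul_c_ge1 : 1 <= (INR r - 1) * c.
Proof.
have r1_ge1 := r_sub1_ge1.
apply: Rle_trans (_ : (INR r - 1) * (1 / (INR r - 1)) <= _); first by right; field; lra.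
by apply: Rmult_le_compat_l; lra.
Qed.

Lemma inv_c_le : 1 / c <= INR r - 1.
Proof.
have c_pos := c_gt0; have rc_ge1 := r_sub1_mul_c_ge1.
apply: (Rmult_le_reg_r c) => //; rewrite /Rdiv Rmult_1_l Rinv_l; lra.
Qed.

Definition threshold k : nat := nat_up (c * INR k).

Lemma threshold_spec k : c * INR k < INR (threshold k) <= c * INR k + 1.
Proof. by apply: nat_up_spec; have := c_gt0; have := pos_INR k; nra. Qed.

Lemma threshold_gt0 k : (0 < threshold k)%N.
Proof. by apply: nat_up_gt0; have := c_gt0; have := pos_INR k; nra. Qed.

Lemma threshold_mono : {homo threshold : i j / (i <= j)%N}.
Proof.
move=> i j /le_INR_leq leij; apply: nat_up_mono.
by apply: Rmult_le_compat_l => //; have := c_gt0; lra.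
Qed.

(* Integrality gives a unit gap even at the endpoint [c = 1 / (r - 1)]. *)
Lemma threshold_excess k : (k.+1 <= (r - 1) * threshold k)%N.
Proof.
apply: ltn_INR; rewrite mult_INR minus_INR; last by apply/leP; lia.
have r1_ge1 := r_sub1_ge1; have c_pos := c_gt0.
have rc_ge1 := r_sub1_mul_c_ge1.
have [lt_t _] := threshold_spec k; have := pos_INR k.
rewrite [INR 1]/=; nra.
Qed.

Lemma threshold_gap e k : 1 / c < e -> INR k - e * INR (threshold k) <= - (e - 1 / c).
Proof.
move=> e_gt; have c_pos := c_gt0; have [lt_t _] := threshold_spec k.
have t_ge1 : 1 <= INR (threshold k) by apply: (@le_INR_leq 1); exact: threshold_gt0.
have k_lt : INR k < 1 / c * INR (threshold k).
  apply: (Rmult_lt_reg_l c) => //; rewrite -Rmult_assoc /Rdiv Rmult_1_l Rinv_r; lra.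
nra.
Qed.

Definition binom_const : nat := 2 ^ r * r`!.

Lemma binom_const_gt0 : 0 < INR binom_const.
Proof. by apply: (@lt_INR_ltn 0); rewrite muln_gt0 expn_gt0 fact_gt0. Qed.

Lemma eventually_pow_le_binom : eventually (fun n => INR n ^ r <= INR 'C(n, r) * INR binom_const).
Proof.
apply: eventually_impl (eventually_geq (2 * r)) => n le2rn.
by have := le_INR_leq (expn_leq_bin_mul le2rn); rewrite mult_INR INR_expn.
Qed.

Lemma eventually_binom_dominates D a : 0 < a ->
  eventually (fun n => D * Rpower (INR n) (INR r - a) <= INR 'C(n, r)).
Proof.
move=> a_gt0; apply: eventually_impl (eventually_and eventually_pow_le_binom
  (eventually_and (eventually_INR_ge 1) (eventually_Rpower_ge (INR binom_const * D) a_gt0))).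
move=> n [+ [n_ge1 leKD]]; have const_pos := binom_const_gt0.
rewrite (pow_Rpower_split a) => [le_pow|]; last lra.
have pos : 0 < Rpower (INR n) (INR r - a) by apply: exp_pos.
have := Rmult_le_compat_r _ _ _ (Rlt_le _ _ pos) leKD.
by move=> ?; apply: (Rmult_le_reg_r (INR binom_const) _ _ const_pos); lra.
Qed.

(* For [m <= D n^(r-a)] the first-moment summand of size [k] is
   [O(n^k (n^(-a))^t(k)) = O(n^(-g))]. *)
Lemma sparse_half_eventually K a g D : 0 < g -> 0 <= D ->
  (forall k, (k <= K)%N -> INR k - a * INR (threshold k) <= - g) ->
  eventually (fun n => forall m, (m <= 'C(n, r))%N ->
    INR m <= D * Rpower (INR n) (INR r - a) ->
    ('C('C(n, r), m) <= 2 * #|sparse_hg r n m K threshold|)%N).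
Proof.
move=> g_gt0 D_ge0 exponent_le; set T := threshold K.
set B := 2 * INR binom_const * INR K ^ r * D.
have const_pos := binom_const_gt0; have constK_ge0 : 0 <= INR binom_const * INR K ^ r.
  by apply: Rmult_le_pos; [lra | apply: pow_le; apply: pos_INR].
have B_ge0 : 0 <= B by rewrite /B; nra.
have r_gt0 : 0 < INR r by have := r_sub1_ge1; lra.
apply: eventually_impl (eventually_and eventually_pow_le_binom
  (eventually_and (eventually_INR_ge 1) (eventually_and
  (eventually_binom_dominates (2 * INR T) r_gt0)
  (eventually_Rpower_ge (2 * INR K.+1 * (1 + B) ^ T) g_gt0)))).
move=> n [le_Npow [N_ge1 [+ le_g]]] m lemM lem; rewrite Rminus_diag.
rewrite /Rpower Rmult_0_l exp_0 Rmult_1_r -/(Rpower _ _) => le2T.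
have T_ge1 : 1 <= INR T by apply: (@le_INR_leq 1); apply: threshold_gt0.
apply: sparse_half => // k lekK;
  have le_tT : INR (threshold k) <= INR T by apply/le_INR_leq/threshold_mono.
  by apply: ltn_INR; lra.
have Npow_pos : 0 < INR n ^ r by apply: pow_lt; lra.
apply: (@first_moment_term_of_real _ _ _ _ _ _ _ (D * Rpower (INR n) (INR r - a))
  (INR n ^ r / (2 * INR binom_const))) => //.
- by apply: Rdiv_lt_0_compat; lra.
- rewrite minus_INR; last by apply/leP/leq_INR; lra.
  apply: (Rmult_le_reg_r (2 * INR binom_const)); first lra.
  have : 0 <= (INR 'C(n, r) - 2 * INR (threshold k)) * INR binom_const.
    by apply: Rmult_le_pos; lra.
  by rewrite /Rdiv Rmult_assoc Rinv_l; lra.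
have -> : INR K ^ r * (D * Rpower (INR n) (INR r - a)) / (INR n ^ r / (2 * INR binom_const)) =
    B * Rpower (INR n) (- a).
  rewrite (@pow_Rpower_split a (INR n) r) ?Rpower_Ropp /B; last lra.
  by field; split; [|split; [lra|]]; apply: Rgt_not_eq; apply: exp_pos.
have KK_ge0 : 0 <= 2 * INR K.+1 by have := pos_INR K.+1; lra.
exact: first_moment_term_decay N_ge1 B_ge0 KK_ge0 (threshold_mono lekK) (exponent_le k lekK) le_g.
Qed.

End Asymptotics.

Lemma pow4_le_2mul m (x : R) : (0 < m)%N -> 4 ^ m <= 2 * x -> 2 ^ m <= x.
Proof.
move=> m_gt0; have -> : 4 = 2 * 2 by ring.
have two_m : 2 <= 2 ^ m by have := Rle_pow 2 1 m ltac:(lra) (elimT leP m_gt0); rewrite pow_1.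
by rewrite Rpow_mult_distr; nra.
Qed.

Lemma binom_ratio_pow_le M m S : (0 < m)%N -> ('C(M, m) <= 2 * S)%N ->
  (INR (M - m) / INR m) ^ m <= 2 * INR S.
Proof.
move=> m_gt0 leCS; have m_pos : 0 < INR m by apply: (@lt_INR_ltn 0).
have := le_INR_leq (leq_trans (expn_leq_bin_fact M m) (leq_mul leCS (leqnn _))).
rewrite !mult_INR !INR_expn [INR 2]/= => le_pow.
have mpow_pos : 0 < INR m ^ m by apply: pow_lt.
apply: (Rmult_le_reg_r (INR m ^ m)) => //.
by rewrite /Rdiv Rpow_mult_distr Rmult_assoc -Rpow_mult_distr Rinv_l ?pow1; lra.
Qed.

Lemma ln_count_lower M m S (rho Q : R) : (0 < m)%N -> INR m <= rho -> 0 < Q ->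
  Q <= INR (M - m) -> ('C(M, m) <= 2 * S)%N -> INR m * (ln Q - ln rho) <= ln 2 + ln (INR S).
Proof.
move=> m_gt0 le_m Q_pos le_Q le_CS; have m_pos : 0 < INR m by apply: (@lt_INR_ltn 0).
have ratio_pos : 0 < INR (M - m) / INR m by apply: Rdiv_lt_0_compat; lra.
have le_ratio := binom_ratio_pow_le m_gt0 le_CS.
have S_pos : 0 < INR S by have := pow_lt _ m ratio_pos; lra.
have := ln_le (pow_lt _ m ratio_pos) le_ratio; rewrite ln_pow // ln_mult //; last lra.
have : ln Q - ln rho <= ln (INR (M - m) / INR m).
  rewrite /Rdiv ln_mult ?ln_Rinv //; try lra; last by apply: Rinv_0_lt_compat.
  by have := ln_le Q_pos le_Q; have := ln_le m_pos le_m; lra.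
by move=> /(Rmult_le_compat_l _ _ _ (Rlt_le _ _ m_pos)); lra.
Qed.

Lemma lower_exponent_arith q c d N L m a0 : 1 <= q -> 0 < d <= c -> 1 <= N ->
  0 <= L <= N - 1 -> (c - d / 2) * N - 1 <= m -> Rabs a0 <= q * L ->
  c * Rabs a0 + q + 1 + Rabs a0 <= d / 2 * q * L ->
  q * (c - d) * N * L + 1 <= m * (q * L - a0).
Proof.
move=> q_ge1 [d_gt0 d_le] N_ge1 [L_ge0 L_le] m_ge a0_le big_dL.
have abs_a0 := Rle_abs a0; have abs_a0' := Rle_abs (- a0); rewrite Rabs_Ropp in abs_a0'.
have X_ge0 : 0 <= q * L - a0 by lra.
have ca0 : (c - d / 2) * a0 <= c * Rabs a0 by have := Rabs_pos a0; nra.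
apply: Rle_trans (_ : ((c - d / 2) * N - 1) * (q * L - a0) <= _); last first.
  by apply: Rmult_le_compat_r.
have : (c * Rabs a0 + q + 1 + Rabs a0) * N <= d / 2 * q * L * N by apply: Rmult_le_compat_r; lra.
nra.
Qed.

Lemma succ_pow_le_exp T : INR T.+1 ^ T <= exp 1 * INR T ^ T.
Proof.
have [->|T_gt0] := posnP T; first by have := exp_ineq1_le 1; rewrite /=; lra.
have T_ge1 : 1 <= INR T by apply: (@le_INR_leq 1).
have -> : INR T.+1 = INR T * (1 + / INR T) by rewrite S_INR; field; lra.
rewrite Rpow_mult_distr [exp 1 * _]Rmult_comm.
apply: Rmult_le_compat_l; first by apply: pow_le; lra.
apply: Rle_trans (_ : exp (/ INR T) ^ T <= _).
  apply: pow_incr; split; last exact: exp_ineq1_le.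
  have : 0 < / INR T by apply: Rinv_0_lt_compat; lra.
  lra.
rewrite -Rpower_pow ?Rpower_mult; last by apply: exp_pos.
by rewrite /Rpower ln_exp Rinv_r; lra.
Qed.

Lemma pow_le_fact_exp T : INR T ^ T <= INR T`! * exp (INR T).
Proof.
elim: T => [|T IHT]; first by rewrite /= exp_0; lra.
rewrite factS mult_INR -tech_pow_Rmult S_INR exp_plus -S_INR.
have T1_pos : 0 < INR T.+1 by apply: (@lt_INR_ltn 0).
apply: Rle_trans (_ : INR T.+1 * (exp 1 * INR T ^ T) <= _).
  by apply: Rmult_le_compat_l; [lra | apply: succ_pow_le_exp].
have := exp_pos 1; have := Rmult_le_compat_l _ _ _ (Rlt_le _ _ T1_pos) IHT; nra.
Qed.

Lemma card_small_hg_le r n T : (0 < T <= 'C(n, r))%N -> (0 < n)%N ->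
  INR #|small_hg r n T| <=
  exp (ln (INR T + 1) + INR r * INR T * ln (INR n) + INR T - INR T * ln (INR T)).
Proof.
move=> /andP[T_gt0 leTM] n_gt0; have := le_INR_leq (card_small_hg_fact leTM).
have T_pos : 0 < INR T by apply: (@lt_INR_ltn 0).
have N_pos : 0 < INR n by apply: (@lt_INR_ltn 0).
rewrite !mult_INR INR_expn => le_small.
have fact_pos : 0 <= INR T`! by apply: pos_INR.
have small_le : INR #|small_hg r n T| * INR T ^ T <= INR T.+1 * INR n ^ (r * T) * exp (INR T).
  apply: Rle_trans (_ : INR #|small_hg r n T| * (INR T`! * exp (INR T)) <= _).
    by apply: Rmult_le_compat_l; [apply: pos_INR | apply: pow_le_fact_exp].
  rewrite -Rmult_assoc; apply: Rmult_le_compat_r; first by left; apply: exp_pos.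
  apply: Rle_trans le_small _; apply: Rmult_le_compat_l; first by apply: pos_INR.
  rewrite pow_mult; apply: pow_incr; split; first by apply: pos_INR.
  by rewrite -INR_expn; apply/le_INR_leq/bin_leq_expn.
rewrite -!Rpower_pow ?S_INR ?mult_INR in small_le; try lra.
rewrite -[INR T + 1]exp_ln /Rpower -?exp_plus in small_le; last lra.
apply: (Rmult_le_reg_r (exp (INR T * ln (INR T)))); first exact: exp_pos.
rewrite -exp_plus; apply: Rle_trans small_le _; right; congr exp; ring.
Qed.

Lemma upper_exponent_arith q c d N L T lnT A : 0 < c -> 0 <= q -> 0 <= T <= c * N ->
  0 <= L -> 0 <= N -> ln (c / 2) + L <= lnT -> Rabs (2 - ln (c / 2)) <= A -> c * A <= q * d * L ->
  T + (q + 1) * T * L + T - T * lnT <= q * (c + d) * N * L.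
Proof.
move=> c_gt0 q_ge0 [T_ge0 T_le] L_ge0 N_ge0 lnT_ge A_ge cA_le.
have := Rle_abs (2 - ln (c / 2)); have := Rabs_pos (2 - ln (c / 2)) => ? ?.
have A_ge' : 0 <= q * L + A by nra.
apply: Rle_trans (_ : T * (q * L + A) <= _).
  by have := Rmult_le_compat_l _ _ _ T_ge0 lnT_ge; nra.
apply: Rle_trans (_ : c * N * (q * L + A) <= _); first by apply: Rmult_le_compat_r.
by have := Rmult_le_compat_r _ _ _ N_ge0 cA_le; nra.
Qed.

Section Counting.
Variables (r : nat) (c : R).
Hypothesis r_ge2 : (2 <= r)%N.
Hypothesis c_ge : 1 / (INR r - 1) <= c.

Local Notation threshold := (threshold c).
Local Notation binom_const := (binom_const r).

Lemma ln_count_lower_poly n m S : 1 <= INR n -> (0 < m)%N -> INR m <= c * INR n ->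
  2 * INR m <= INR 'C(n, r) -> INR n ^ r <= INR 'C(n, r) * INR binom_const ->
  ('C('C(n, r), m) <= 2 * S)%N ->
  INR m * ((INR r - 1) * ln (INR n) - (ln (2 * INR binom_const) + ln c)) <= ln 2 + ln (INR S).
Proof.
move=> N_ge1 m_gt0 m_le le2m le_Npow le_CS; have c_pos := c_gt0 r_ge2 c_ge.
have const2_pos : 0 < 2 * INR binom_const by have := binom_const_gt0 r; lra.
have Npow_pos : 0 < INR n ^ r by apply: pow_lt; lra.
have M_m : INR n ^ r / (2 * INR binom_const) <= INR ('C(n, r) - m).
  rewrite minus_INR; last by apply/leP/leq_INR; have := pos_INR m; lra.
  apply: (Rmult_le_reg_r (2 * INR binom_const)) => //.
  have : 0 <= (INR 'C(n, r) - 2 * INR m) * INR binom_const by apply: Rmult_le_pos; lra.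
  by rewrite /Rdiv Rmult_assoc Rinv_l; lra.
have := ln_count_lower m_gt0 m_le (Rdiv_lt_0_compat _ _ Npow_pos const2_pos) M_m le_CS.
have inv_const_pos : 0 < / (2 * INR binom_const) by apply: Rinv_0_lt_compat.
rewrite /Rdiv (ln_mult (INR n ^ r)) ?(ln_mult c) ?ln_Rinv ?ln_pow //; try lra.
Qed.

Lemma sparse_count_lower K d : 0 < d <= c -> eventually (fun n => exists2 m,
  (m < threshold n)%N &
  Rpower (INR n) ((INR r - 1) * (c - d) * INR n) <= INR #|sparse_hg r n m K threshold|).
Proof.
move=> [d_gt0 d_le]; have c_pos := c_gt0 r_ge2 c_ge; have r1_ge1 := r_sub1_ge1 r_ge2.
have const_pos := binom_const_gt0 r.
have gap k : (k <= K)%N -> INR k - (INR r - 1) * INR (threshold k) <= - 1.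
  move=> _; have := le_INR_leq (threshold_excess r_ge2 c_ge k).
  by rewrite mult_INR minus_INR ?S_INR ?[INR 0 + 1]/=; [lra | apply/leP; lia].
set a0 := ln (2 * INR binom_const) + ln c.
have dq_pos : 0 < d / 2 * (INR r - 1) by nra.
apply: eventually_impl (eventually_and
  (sparse_half_eventually r_ge2 c_ge Rlt_0_1 (Rlt_le _ _ c_pos) gap)
  (eventually_and (eventually_binom_dominates r (2 * c) (Rlt_le_trans _ _ _ Rlt_0_1 r1_ge1))
  (eventually_and (eventually_pow_le_binom r) (eventually_and (eventually_INR_ge 1)
  (eventually_and (eventually_mul_INR_ge 4 c_pos)
  (eventually_and (eventually_scaled_ln_ge (Rabs a0) (Rlt_le_trans _ _ _ Rlt_0_1 r1_ge1))
  (eventually_scaled_ln_ge (c * Rabs a0 + (INR r - 1) + 1 + Rabs a0) dq_pos))))))).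
move=> n [half [dom [le_Npow [N_ge1 [N_ge4c [L_large1 L_large2]]]]]].
have N_pos : 0 < INR n by lra.
rewrite Rpower_sub_sub1 // in half dom; set L := ln (INR n) in L_large1 L_large2 *.
set m := nat_floor ((c - d / 2) * INR n).
have [m_le m_gt] : INR m <= (c - d / 2) * INR n < INR m + 1 by apply: nat_floor_spec; nra.
have [lt_t _] := threshold_spec r_ge2 c_ge n.
exists m; first by apply: ltn_INR; nra.
have m_ge1 : (0 < m)%N by apply: (@ltn_INR 0); rewrite [INR 0]/=; nra.
have lemM : (m <= 'C(n, r))%N by apply: leq_INR; nra.
have m_le_cN : INR m <= c * INR n by nra.
have le_CS := half m lemM m_le_cN.
have S_pos : 0 < INR #|sparse_hg r n m K threshold|.
  apply: (@lt_INR_ltn 0); have := bin_gt0 'C(n, r) m; rewrite lemM; lia.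
have := ln_count_lower_poly N_ge1 m_ge1 m_le_cN ltac:(lra) le_Npow le_CS; rewrite -/a0 -/L.
move=> ln_S; have ln2_le := ln_le_sub1 Rlt_0_2.
have L_le := ln_le_sub1 N_pos; have L_ge0 := ln_ge0 N_ge1.
have m_ge : (c - d / 2) * INR n - 1 <= INR m by lra.
have := lower_exponent_arith r1_ge1 (conj d_gt0 d_le) N_ge1 (conj L_ge0 L_le) m_ge
  L_large1 L_large2.
by rewrite /Rpower -[INR #|_|]exp_ln // -/L => arith; apply: exp_le; lra.
Qed.
Lemma small_count_upper d : 0 < d -> eventually (fun n =>
  INR #|small_hg r n (threshold n).-1| <= Rpower (INR n) ((INR r - 1) * (c + d) * INR n)).
Proof.
move=> d_gt0; have c_pos := c_gt0 r_ge2 c_ge; have r1_ge1 := r_sub1_ge1 r_ge2.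
set A := Rabs (2 - ln (c / 2)).
have qd_pos : 0 < (INR r - 1) * d by nra.
apply: eventually_impl (eventually_and
  (eventually_binom_dominates r c (Rlt_le_trans _ _ _ Rlt_0_1 r1_ge1))
  (eventually_and (eventually_INR_ge 1) (eventually_and (eventually_mul_INR_ge 2 c_pos)
  (eventually_scaled_ln_ge (c * A) qd_pos)))).
move=> n [+ [N_ge1 [N_ge2c L_large]]]; have N_pos : 0 < INR n by lra.
rewrite Rpower_sub_sub1 // => dom; set L := ln (INR n) in L_large *.
set T := (threshold n).-1; have [lt_t le_t] := threshold_spec r_ge2 c_ge n.
have T_eq : INR T = INR (threshold n) - 1.
  by rewrite /T -[in RHS](prednK (threshold_gt0 r_ge2 c_ge n)) S_INR; ring.
have le_TM : (0 < T <= 'C(n, r))%N by apply/andP; split; apply: leq_INR; rewrite /= ?T_eq; lra.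
apply: Rle_trans (card_small_hg_le le_TM (leq_INR _)) _; first by rewrite /=; lra.
have lnT_ge : ln (c / 2) + L <= ln (INR T).
  rewrite /L -ln_mult; [apply: ln_le | lra | lra]; nra.
have := upper_exponent_arith c_pos (Rlt_le _ _ (Rlt_le_trans _ _ _ Rlt_0_1 r1_ge1))
  (conj (_ : 0 <= INR T) (_ : INR T <= c * INR n)) (ln_ge0 N_ge1) (Rlt_le _ _ N_pos)
  lnT_ge (Rle_refl A) L_large.
move=> /(_ ltac:(lra) ltac:(lra)) arith.
have ln_T1 : ln (INR T + 1) <= INR T by have := ln_le_sub1 (x := INR T + 1); lra.
by rewrite /Rpower -/L in arith *; apply: exp_le; lra.
Qed.

Lemma sparse_count_huge K eps : 1 / c < eps -> eventually (fun n => exists m,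
  Rpower 2 (Rpower (INR n) (INR r - eps)) <= INR #|sparse_hg r n m K threshold|).
Proof.
move=> eps_gt; have c_pos := c_gt0 r_ge2 c_ge; have r1_ge1 := r_sub1_ge1 r_ge2.
set e := Rmin eps (INR r); set g := e - 1 / c.
have inv_c := inv_c_le r_ge2 c_ge.
have e_gt : 1 / c < e by apply: Rmin_glb_lt; lra.
have e_le : e <= eps := Rmin_l eps (INR r).
have e_le_r : e <= INR r := Rmin_r eps (INR r).
have g_gt0 : 0 < g by rewrite /g; lra.
have e_pos : 0 < e.
  have : 0 < 1 / c by apply: Rdiv_lt_0_compat; lra.
  lra.
have gap k : (k <= K)%N -> INR k - e * INR (threshold k) <= - g.
  by move=> _; exact: (@threshold_gap r c r_ge2 c_ge e k e_gt).
apply: eventually_impl (eventually_and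
  (sparse_half_eventually r_ge2 c_ge g_gt0 (Rlt_le _ _ Rlt_0_2) gap)
  (eventually_and (eventually_binom_dominates r 10 e_pos) (eventually_INR_ge 1))).
move=> n [half [dom N_ge1]]; set x := Rpower (INR n) (INR r - e) in half dom.
have x_ge1 : 1 <= x by apply: Rpower_ge1; lra.
have [lt_m le_m] := nat_up_spec (Rle_trans _ _ _ Rle_0_1 x_ge1).
set m := nat_up x in lt_m le_m; exists m.
have m_gt0 : (0 < m)%N by apply: nat_up_gt0; lra.
have lemM : (m <= 'C(n, r))%N by apply: leq_INR; lra.
have := binom_ratio_pow_le m_gt0 (half m lemM ltac:(lra)).
set S := #|sparse_hg r n m K threshold|; set M := 'C(n, r) in dom lemM *.
have m_pos : 0 < INR m by lra.
have ratio_ge4 : 4 <= INR (M - m) / INR m.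
  rewrite minus_INR; last exact/leP.
  by apply: (Rmult_le_reg_r (INR m)) => //; rewrite /Rdiv Rmult_assoc Rinv_l; lra.
move=> /(Rle_trans _ _ _ (pow_incr _ _ m (conj (ltac:(lra) : 0 <= 4) ratio_ge4))).
move=> /(pow4_le_2mul m_gt0) le_S; apply: Rle_trans le_S; rewrite -Rpower_pow; last lra.
apply: Rle_Rpower; first lra.
apply: Rle_trans (_ : x <= _); last lra.
by apply: Rle_Rpower; lra.
Qed.

End Counting.

Section Construction.
Variables (r : nat) (c eps : R).
Hypothesis r_ge2 : (2 <= r)%N.
Hypothesis c_ge : 1 / (INR r - 1) <= c.
Hypothesis eps_gt : 1 / c < eps.

Local Notation threshold := (threshold c).

Definition precision j : R := c / (INR j + 2).

Lemma precision_spec j : 0 < precision j <= c.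
Proof.
have c_pos := c_gt0 r_ge2 c_ge; have j_ge0 := pos_INR j; rewrite /precision.
split; first by apply: Rdiv_lt_0_compat; lra.
by apply: (Rmult_le_reg_r (INR j + 2)); [lra | rewrite /Rdiv Rmult_assoc Rinv_l; nra].
Qed.

Lemma precision_le d i : 0 < d -> (nat_up (c / d) <= i)%N -> precision i <= d.
Proof.
move=> d_gt0 le_i; have c_pos := c_gt0 r_ge2 c_ge; have i_pos := pos_INR i.
have [c_lt _] := nat_up_spec (Rlt_le _ _ (Rdiv_lt_0_compat _ _ c_pos d_gt0)).
have c_le : c <= d * (INR i + 2).
  apply: (Rle_trans _ (c / d * d)); first by right; field; lra.
  by rewrite Rmult_comm; apply: Rmult_le_compat_l; have := le_INR_leq le_i; lra.
apply: (Rmult_le_reg_r (INR i + 2)); first lra.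
by rewrite /precision /Rdiv Rmult_assoc Rinv_l; lra.
Qed.

(* The last clause is about [n.-1]: below the next size [n], only the sizes
   up to [K] constrain the property. *)
Definition good_step j K n : Prop :=
  (exists2 m, (m < threshold n)%N &
     Rpower (INR n) ((INR r - 1) * (c - precision j) * INR n)
       <= INR #|sparse_hg r n m K threshold|) /\
  INR #|small_hg r n (threshold n).-1|
    <= Rpower (INR n) ((INR r - 1) * (c + precision j) * INR n) /\
  exists m, Rpower 2 (Rpower (INR n.-1) (INR r - eps)) <= INR #|sparse_hg r n.-1 m K threshold|.

Lemma good_step_ex j K : exists n, (K < n)%N /\ good_step j K n.
Proof.
have [d_gt0 d_le] := precision_spec j.
apply/eventually_exists_gt/eventually_and; first exact: sparse_count_lower.
apply: eventually_and; first exact: small_count_upper.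
exact: eventually_pred (sparse_count_huge r_ge2 c_ge K eps_gt).
Qed.

Definition in_sizes (n : nat) : bool := in_grow good_step_ex n.

Definition sparse_property : forall n, pred {set {set 'I_n}} := sparse_on r in_sizes threshold.

Local Notation sizes := (grow good_step_ex).

Lemma in_sizes_below j s : in_sizes s -> (s < sizes j.+1)%N -> (s <= sizes j)%N.
Proof. by move=> /in_growP[l <-]; rewrite (leqW_mono (grow_mono _)) ltnS grow_mono. Qed.

Lemma sparse_le_Hn n m K :
  (forall s, in_sizes s -> (s <= n)%N -> (s <= K)%N \/ s = n /\ (m < threshold n)%N) ->
  INR #|sparse_hg r n m K threshold| <= INR (Hn sparse_property n).
Proof. by move=> sizesS; apply/le_INR_leq/subset_leq_card/sparse_hg_sub_on. Qed.

Lemma sparse_property_asymptotics d : 0 < d -> exists N : nat, forall n : nat,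
  in_sizes n -> (N <= n)%N ->
  Rpower (INR n) ((INR r - 1) * (c - d) * INR n) <= INR (Hn sparse_property n) /\
  INR (Hn sparse_property n) <= Rpower (INR n) ((INR r - 1) * (c + d) * INR n).
Proof.
move=> d_gt0; have r1_ge1 := r_sub1_ge1 r_ge2.
exists (sizes (nat_up (c / d))).+1 => n /in_growP[[|i] <-] lt_n; first by [].
have lt_i : (nat_up (c / d) <= i)%N by rewrite -ltnS -(leqW_mono (grow_mono good_step_ex)).
have [_ [[m ltm low] [up _]]] := grow_step good_step_ex i.
have prec_le := precision_le d_gt0 lt_i.
have N_ge1 : 1 <= INR (sizes i.+1) by apply: (@le_INR_leq 1); apply: leq_ltn_trans lt_n.
have prec_pos := precision_spec i.
have sizes_le s : in_sizes s -> (s <= sizes i.+1)%N ->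
    (s <= sizes i)%N \/ s = sizes i.+1 /\ (m < threshold (sizes i.+1))%N.
  by move=> Ss; rewrite leq_eqVlt => /orP[/eqP ->|/(in_sizes_below Ss) ->]; [right | left].
split.
  apply: Rle_trans (sparse_le_Hn sizes_le); apply: Rle_trans low; apply: Rle_Rpower => //.
  by apply: Rmult_le_compat_r; [exact: pos_INR | apply: Rmult_le_compat_l; lra].
apply: (Rle_trans _ _ _ (Rle_trans _ _ _ _ up)).
  apply/le_INR_leq/subset_leq_card/sparse_on_sub_small; last exact: (threshold_gt0 r_ge2 c_ge).
  by apply/in_growP; exists i.+1.
apply: Rle_Rpower => //.
by apply: Rmult_le_compat_r; [exact: pos_INR | apply: Rmult_le_compat_l; lra].
Qed.

Lemma sparse_property_huge m : exists n : nat, (m <= n)%N /\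
  Rpower 2 (Rpower (INR n) (INR r - eps)) <= INR (Hn sparse_property n).
Proof.
have [lt_m [_ [_ [K huge]]]] := grow_step good_step_ex m.
exists (sizes m.+1).-1; split; first by rewrite -ltnS prednK ?grow_ge //; apply: leq_ltn_trans lt_m.
apply: Rle_trans huge (sparse_le_Hn _) => s Ss le_s; left; apply: in_sizes_below => //.
by apply: leq_ltn_trans le_s _; rewrite prednK //; apply: leq_ltn_trans lt_m.
Qed.

End Construction.

Theorem theorem1p5 (r : nat) (c eps : R) :
  (2 <= r)%nat -> 1 / (INR r - 1) <= c -> 1 / c < eps ->
  exists (P : forall n : nat, pred {set {set 'I_n}}) (S : nat -> Prop),
    hereditary_prop r P /\
    (forall m : nat, exists n : nat, (m <= n)%nat /\ S n) /\
    (forall delta : R, 0 < delta -> exists N : nat, forall n : nat,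
       S n -> (N <= n)%nat ->
       Rpower (INR n) ((INR r - 1) * (c - delta) * INR n) <= INR (Hn P n) /\
       INR (Hn P n) <= Rpower (INR n) ((INR r - 1) * (c + delta) * INR n)) /\
    (forall m : nat, exists n : nat, (m <= n)%nat /\
       Rpower 2 (Rpower (INR n) (INR r - eps)) <= INR (Hn P n)).
Proof.
move=> r_ge2 c_ge eps_gt.
exists (sparse_property r_ge2 c_ge eps_gt), (fun n => in_sizes r_ge2 c_ge eps_gt n).
split; first exact: sparse_on_hereditary.
split.
  move=> m; exists (grow (good_step_ex r_ge2 c_ge eps_gt) m).
  by split; [exact: grow_ge | apply/in_growP; exists m].
split; [exact: sparse_property_asymptotics | exact: sparse_property_huge].
Qed.
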